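(* Under the hypotheses of the preceding theorem (theorem:ConvergenceRatesSparsityFull), if moreover $1<p\le2$, then $\|c^\alpha-c^\ast\|=\mathcal{O}(\sqrt{\delta+\epsilon})$ as $\delta+\epsilon\to0$.
   Context: The hypotheses are: sparsity setting with $X,Y,Z$ Hilbert spaces, $B:X\times Y\to Z$ bilinear with $\|B(c,s)\|\le C\|c\|\|s\|$ and sequentially weak-weak continuous, $P:Y\to Y_n\subset Y$ linear bounded ($Y_n$ finite-dimensional), $s_{\mathrm{calib}}\in Y_n$, $\mathcal{R}_s:Y\to[0,\infty)$ proper convex weakly lower semi-continuous, $\{\varphi_i\}$ an orthonormal basis of $X$, $1\le w_i<\infty$, $\Phi_p(c)=\sum_iw_i|\langle c,\varphi_i\rangle|^p$, fixed $\gamma>0$, $\nu_1,\nu_2>0$, $\tilde{\mathcal{R}}(c,s)=\Phi_p(c)+\frac{\nu_2}{2}\|P(s)-s_{\mathrm{calib}}\|^2+\nu_1\mathcal{R}_s(s)$, $J^{u,s_m}_{\alpha,\beta,\mu}(c,s)=\frac12\|B(c,s)-u\|^2+\frac{\gamma}{2}\|s-s_m\|^2+\frac{\mu}{2}\|P(s)-s_{\mathrm{calib}}\|^2+\alpha\Phi_p(c)+\beta\mathcal{R}_s(s)$; $u^\ast=B(c^\ast,s^\ast)$ with $c^\ast\in\arg\min\{\Phi_p(c):B(c,s^\ast)=u^\ast\}$; $\|u^\ast-u_\delta\|\le\delta$, $\|s^\ast-s_{\mathrm{mod},\epsilon}\|\le\epsilon$; there exist $\kappa_1\in[0,1)$,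 $\kappa_2\ge0$, $0\le\kappa_3<\min\{1,\gamma/(2\alpha_{\max})\}$, $\xi^\ast\in\partial\tilde{\mathcal{R}}(c^\ast,s^\ast)$ with $\langle\xi^\ast,(c^\ast-c,s^\ast-s)\rangle\le\kappa_1D^{\xi^\ast}_{\tilde{\mathcal{R}}}((c,s),(c^\ast,s^\ast))+\kappa_2\|B(c,s)-B(c^\ast,s^\ast)\|+\kappa_3\|s-s^\ast\|^2$ for all $(c,s)$, where $D^{\xi}_{\mathcal{R}}(x,x^\ast)=\mathcal{R}(x)-\mathcal{R}(x^\ast)-\langle\xi,x-x^\ast\rangle$; $(c^\alpha,s^\alpha)$ minimizes $J^{u_\delta,s_{\mathrm{mod},\epsilon}}_{\alpha,\nu_1\alpha,\nu_2\alpha}$, $0<\alpha\le\alpha_{\max}$, and $m(\delta+\epsilon)\le\alpha\le M(\delta+\epsilon)$ for constants $0<m\le M$. *)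

From HB Require Import structures.
From mathcomp Require Import all_boot all_order all_algebra.
From mathcomp Require Import all_classical all_reals all_analysis.
Set Implicit Arguments. Unset Strict Implicit. Unset Printing Implicit Defensive.
Import Order.TTheory GRing.Theory Num.Theory numFieldNormedType.Exports.
Local Open Scope classical_set_scope.
Local Open Scope ring_scope.

Section Defs.
Variable R : realType.

Definition hnorm (V : lmodType R) (ip : V -> V -> R) (x : V) : R := Num.sqrt (ip x x).

Record hilbert (V : lmodType R) (ip : V -> V -> R) : Prop := Hilbert {
  ip_sym : forall x y, ip x y = ip y x;
  ip_linl : forall (a : R) x y z, ip (a *: x + y) z = a * ip x z + ip y z;
  ip_ge0 : forall x, 0 <= ip x x;
  ip_def : forall x, ip x x = 0 -> x = 0;
  ip_complete : forall u : nat -> V,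
    (forall e : R, 0 < e -> exists N, forall m n, (N <= m)%N -> (N <= n)%N ->
        hnorm ip (u m - u n) < e) ->
    exists l : V, forall e : R, 0 < e -> exists N, forall n, (N <= n)%N ->
        hnorm ip (u n - l) < e }.

Definition weak_cvg (V : lmodType R) (ip : V -> V -> R) (u : nat -> V) (x : V) :=
  forall y : V, (fun n => ip (u n) y) @ \oo --> (ip x y : R^o).

Definition bilinear_map (X Y Z : lmodType R) (B : X -> Y -> Z) :=
  (forall (a : R) c c' s, B (a *: c + c') s = a *: B c s + B c' s) /\
  (forall (a : R) c s s', B c (a *: s + s') = a *: B c s + B c s').

Definition seq_weak_weak_cont (X Y Z : lmodType R)
    (ipX : X -> X -> R) (ipY : Y -> Y -> R) (ipZ : Z -> Z -> R) (B : X -> Y -> Z) :=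
  forall (cn : nat -> X) (sn : nat -> Y) c s,
    weak_cvg ipX cn c -> weak_cvg ipY sn s -> weak_cvg ipZ (fun n => B (cn n) (sn n)) (B c s).

Definition linear_op (V W : lmodType R) (P : V -> W) :=
  forall (a : R) x y, P (a *: x + y) = a *: P x + P y.

Definition bounded_op (V W : lmodType R) (ipV : V -> V -> R) (ipW : W -> W -> R) (P : V -> W) :=
  exists K : R, forall x, hnorm ipW (P x) <= K * hnorm ipV x.

Definition finite_dim_subspace (V : lmodType R) (S : set V) :=
  exists (n : nat) (e : 'I_n -> V),
    S = [set y | exists a : 'I_n -> R, y = \sum_(i < n) a i *: e i].

Definition convex_fun (V : lmodType R) (f : V -> R) :=
  forall (t : R) x y, 0 <= t <= 1 -> f (t *: x + (1 - t) *: y) <= t * f x + (1 - t) * f y.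

Definition weakly_lsc (V : lmodType R) (ip : V -> V -> R) (f : V -> R) :=
  forall (u : nat -> V) x, weak_cvg ip u x ->
    ((f x)%:E <= limn_einf (fun n => (f (u n))%:E))%E.

Definition orthonormal_basis (V : lmodType R) (ip : V -> V -> R) (I : choiceType) (phi : I -> V) :=
  (forall i j, ip (phi i) (phi j) = if i == j then 1 else 0) /\
  (forall x, (forall i, ip x (phi i) = 0) -> x = 0).

Definition Phi_p (X : lmodType R) (ipX : X -> X -> R) (I : choiceType) (phi : I -> X)
    (w : I -> R) (p : R) (c : X) : \bar R :=
  \esum_(i in [set: I]) (w i * `| ipX c (phi i) | `^ p)%:E.

(* subgradient and Bregman distance of an extended-real functional on a Hilbert
   space, with the dual identified with the space through the inner product *)
Definition subgradient (V : lmodType R) (ip : V -> V -> R) (F : V -> \bar R) (xs xi : V) :=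
  F xs \is a fin_num /\ forall x, (F xs + (ip xi (x - xs))%:E <= F x)%E.

Definition bregman (V : lmodType R) (ip : V -> V -> R) (F : V -> \bar R) (xi x xs : V) : \bar R :=
  (F x - F xs - (ip xi (x - xs))%:E)%E.

Definition ip_prod (X Y : lmodType R) (ipX : X -> X -> R) (ipY : Y -> Y -> R)
    (a b : X * Y) : R := ipX a.1 b.1 + ipY a.2 b.2.

Definition Rtilde (X Y : lmodType R) (ipX : X -> X -> R) (ipY : Y -> Y -> R)
    (I : choiceType) (phi : I -> X) (w : I -> R) (p : R)
    (P : Y -> Y) (scal : Y) (Rs : Y -> R) (nu1 nu2 : R) (cs : X * Y) : \bar R :=
  (Phi_p ipX phi w p cs.1 +
   (nu2 / 2 * hnorm ipY (P cs.2 - scal) ^+ 2 + nu1 * Rs cs.2)%:E)%E.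

Definition Jfun (X Y Z : lmodType R) (ipX : X -> X -> R) (ipY : Y -> Y -> R)
    (ipZ : Z -> Z -> R) (B : X -> Y -> Z)
    (I : choiceType) (phi : I -> X) (w : I -> R) (p : R)
    (P : Y -> Y) (scal : Y) (Rs : Y -> R) (gamma : R)
    (u : Z) (sm : Y) (alpha beta mu : R) (cs : X * Y) : \bar R :=
  ((1 / 2 * hnorm ipZ (B cs.1 cs.2 - u) ^+ 2 + gamma / 2 * hnorm ipY (cs.2 - sm) ^+ 2
    + mu / 2 * hnorm ipY (P cs.2 - scal) ^+ 2 + beta * Rs cs.2)%:E
   + alpha%:E * Phi_p ipX phi w p cs.1)%E.

End Defs.

(* Under the source condition of the preceding theorem, the Bregman distance of
   Rtilde(c, s) = Phi_p(c) + G(s) between a regularized solution (c^alpha, s^alpha)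
   and the exact solution (cst, sst) is O(delta + eps).  For 1 < p <= 2 the weighted
   l^p penalty Phi_p is uniformly convex on bounded sets, so this Bregman distance
   dominates a multiple of ||c^alpha - cst||^2, which gives the O(sqrt(delta + eps)) rate. *)

From HB Require Import structures.
From mathcomp Require Import all_boot all_order all_algebra.
From mathcomp Require Import all_classical all_reals all_analysis.
From mathcomp Require Import ring lra.
Import Order.TTheory GRing.Theory Num.Theory numFieldNormedType.Exports.
Local Open Scope classical_set_scope.
Local Open Scope ring_scope.
Set Implicit Arguments. Unset Strict Implicit. Unset Printing Implicit Defensive.

(* The modulus of convexity of t |-> |t|^p on [-K, K], for 1 < p <= 2. *)
Section ScalarConvexity.
Variable R : realType.
Implicit Types r u v x y a K : R.

Lemma powR_bernoulli r v : 0 < r <= 1 -> 0 <= v -> v `^ r <= 1 + r * (v - 1).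
Proof.
move=> /andP[r0 r1] v0.
have [->|rn1] := eqVneq r 1; first by rewrite powRr1 //; lra.
have r1' : r < 1 by rewrite lt_neqAle rn1.
have young := @conjugate_powR R (v `^ r) 1 (r^-1) ((1 - r)^-1) (powR_ge0 _ _) ler01.
have conj_exp : r^-1^-1 + (1 - r)^-1^-1 = 1 by rewrite !invrK; lra.
have := young (ltac:(by rewrite invr_gt0)) (ltac:(by rewrite invr_gt0 subr_gt0)) conj_exp.
rewrite mulr1 powR1 -powRrM mulfV ?gt_eqF // powRr1 // !invrK.
lra.
Qed.

Lemma powR_succ r u : 0 <= u -> 0 < r -> u `^ (1 + r) = u * u `^ r.
Proof.
move=> u0 r0; rewrite -(mulr_powRB1 u0); first by rewrite addrAC subrr add0r.
lra.
Qed.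

(* The algebraic core of powR_quadratic_gap, with w standing for u^r. *)
Lemma quadratic_gap_arith r u w : 0 < r <= 1 -> 0 < u <= 2 -> 0 <= w ->
  w <= 1 + r * (u - 1) -> u <= (u + r * (1 - u)) * w ->
  r ^+ 2 / 2 * (u - 1) ^+ 2 <= u * w - 1 - (1 + r) * (u - 1).
Proof.
move=> /andP[r0 r1] /andP[u0 u2] w0 upper lower.
have base : r * (u - 1) * (w - 1) <= u * w - 1 - (1 + r) * (u - 1) by nra.
apply: le_trans base.
have [u1|u1] := lerP u 1.
  have H : r * (1 - u) <= 1 - w by nra.
  have H2 : r * (1 - u) * (r * (1 - u)) <= r * (1 - u) * (1 - w).
    by apply: ler_wpM2l => //; apply: mulr_ge0; lra.
  have : 0 <= (r * (1 - u)) ^+ 2 by apply: sqr_ge0.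
  nra.
have pos : 0 < u + r * (1 - u) by nra.
have H : r * (u - 1) <= (w - 1) * (u + r * (1 - u)) by nra.
have w1 : 0 <= w - 1 by nra.
have : r * (u - 1) <= (w - 1) * 2 by nra.
nra.
Qed.

Lemma powR_quadratic_gap r u : 0 < r <= 1 -> 0 <= u <= 2 ->
  r ^+ 2 / 2 * (u - 1) ^+ 2 <= u `^ (1 + r) - 1 - (1 + r) * (u - 1).
Proof.
move=> rr /andP[u0 u2]; have [r0 r1] := andP rr.
have [->|un0] := eqVneq u 0.
  rewrite powR0; last by apply/negP => /eqP; lra.
  nra.
have u0' : 0 < u by rewrite lt_neqAle eq_sym un0.
rewrite powR_succ //; apply: quadratic_gap_arith; rewrite ?u0' ?u2 ?powR_ge0 //.
  exact: powR_bernoulli.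
have inv_bound : u^-1 `^ r <= 1 + r * (u^-1 - 1).
  by apply: powR_bernoulli; rewrite // invr_ge0 ltW.
have inv_mul : u^-1 `^ r * u `^ r = 1.
  by rewrite -powRM ?invr_ge0 ?mulVf ?gt_eqF ?powR1 //; lra.
have : 1 <= (1 + r * (u^-1 - 1)) * u `^ r.
  by rewrite -[X in X <= _]inv_mul; apply: ler_wpM2r => //; apply: powR_ge0.
move=> /(ler_wpM2l (ltW u0')); rewrite mulr1.
suff -> : u * ((1 + r * (u^-1 - 1)) * u `^ r) = (u + r * (1 - u)) * u `^ r by [].
by field; rewrite gt_eqF.
Qed.

Lemma sqr_powR_le p a K : 0 < p <= 2 -> 0 <= a <= K -> 0 < K ->
  a ^+ 2 * K `^ p <= K ^+ 2 * a `^ p.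
Proof.
move=> /andP[p0 p2] /andP[a0 aK] K0.
have [->|an0] := eqVneq a 0.
  by rewrite expr0n /= mul0r mulr_ge0 ?powR_ge0 ?sqr_ge0.
have a0' : 0 < a by rewrite lt_neqAle eq_sym an0.
set q := a / K.
have q0 : 0 < q by rewrite divr_gt0.
have q1 : q <= 1 by rewrite ler_pdivrMr // mul1r.
have -> : a = q * K by rewrite /q divfK // gt_eqF.
have hq : q ^+ 2 <= q `^ p.
  have := ger_powR (introT andP (conj q0 q1)) p2.
  by rewrite -(@natr1 R 1) -[1%:R + 1]/(2%:R) powR_mulrn //; apply: ltW.
rewrite powRM ?(ltW q0) ?(ltW K0) // exprMn.
have -> : q ^+ 2 * K ^+ 2 * K `^ p = K ^+ 2 * (q ^+ 2 * K `^ p) by ring.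
by apply: ler_wpM2l; [apply: sqr_ge0 | apply: ler_wpM2r => //; apply: powR_ge0].
Qed.

Lemma midpoint_gap_normalized r u1 u2 : 0 < r <= 1 -> 0 <= u1 <= 2 -> 0 <= u2 <= 2 ->
  u1 + u2 = 2 ->
  r ^+ 2 / 2 * ((u1 - 1) ^+ 2 + (u2 - 1) ^+ 2) <= u1 `^ (1 + r) + u2 `^ (1 + r) - 2.
Proof.
move=> rr u1b u2b u12.
have gap1 := powR_quadratic_gap rr u1b; have gap2 := powR_quadratic_gap rr u2b.
have : (1 + r) * (u1 - 1) + (1 + r) * (u2 - 1) = 0.
  by rewrite -mulrDr (_ : u1 - 1 + (u2 - 1) = 0) ?mulr0 //; lra.
lra.
Qed.

Lemma midpoint_gap_same_sign r K x y : 0 < r <= 1 -> 0 < K -> 0 <= x <= K -> 0 <= y <= K ->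
  r ^+ 2 / 4 * K `^ (1 + r) / K ^+ 2 * (x - y) ^+ 2 <=
  x `^ (1 + r) + y `^ (1 + r) - 2 * (2^-1 * (x + y)) `^ (1 + r).
Proof.
move=> rr K0 /andP[x0 xK] /andP[y0 yK]; have [r0 r1] := andP rr.
have p0 : 1 + r != 0 by apply/negP => /eqP; lra.
set mid := 2^-1 * (x + y).
have [mid0|midn0] := eqVneq mid 0.
  have [-> ->] : x = 0 /\ y = 0 by move: mid0; rewrite /mid; lra.
  rewrite mid0 !powR0 //; lra.
have mid0 : 0 < mid by rewrite lt_neqAle eq_sym midn0 /mid; lra.
(* rescale so that the midpoint is 1 *)
set u1 := x / mid; set u2 := y / mid.
have ex : x = u1 * mid by rewrite /u1 divfK // gt_eqF.
have ey : y = u2 * mid by rewrite /u2 divfK // gt_eqF.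
have xy0 : 0 < x + y by move: mid0; rewrite /mid; lra.
have u12 : u1 + u2 = 2 by rewrite /u1 /u2 -mulrDl /mid; field; rewrite gt_eqF.
have u10 : 0 <= u1 by rewrite divr_ge0 // ltW.
have u20 : 0 <= u2 by rewrite divr_ge0 // ltW.
set S := (u1 - 1) ^+ 2 + (u2 - 1) ^+ 2.
set Kp := K `^ (1 + r); set Mp := mid `^ (1 + r).
have Mp0 : 0 <= Mp by apply: powR_ge0.
have gap : Mp * (r ^+ 2 / 2 * S) <= Mp * (u1 `^ (1 + r) + u2 `^ (1 + r) - 2).
  by apply: ler_wpM2l => //; apply: midpoint_gap_normalized => //; apply/andP; lra.
have dist : (x - y) ^+ 2 = 2 * mid ^+ 2 * S.
  rewrite ex ey /S; have -> : u2 = 2 - u1 by lra.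
  ring.
have -> : x `^ (1 + r) + y `^ (1 + r) - 2 * Mp =
    Mp * (u1 `^ (1 + r) + u2 `^ (1 + r) - 2).
  have ex' : x `^ (1 + r) = u1 `^ (1 + r) * Mp by rewrite {1}ex powRM // ltW.
  have ey' : y `^ (1 + r) = u2 `^ (1 + r) * Mp by rewrite {1}ey powRM // ltW.
  rewrite ex' ey'; ring.
apply: le_trans gap; rewrite dist -subr_ge0.
have K2 : 0 < K ^+ 2 by rewrite exprn_gt0.
have -> : Mp * (r ^+ 2 / 2 * S) - r ^+ 2 / 4 * Kp / K ^+ 2 * (2 * mid ^+ 2 * S)
   = r ^+ 2 / 2 * S / K ^+ 2 * (K ^+ 2 * Mp - mid ^+ 2 * Kp).
  by field; rewrite gt_eqF.
have S0 : 0 <= S by rewrite addr_ge0 ?sqr_ge0.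
apply: mulr_ge0; first by apply: divr_ge0; [apply: mulr_ge0; [nra|] | apply: ltW].
rewrite subr_ge0; apply: sqr_powR_le; rewrite ?K0 //; apply/andP; split; rewrite /mid; lra.
Qed.

(* Midpoint gap for s >= t >= 0, i.e. for the pair (s, -t) of opposite signs. *)
Lemma midpoint_gap_opposite_aux r K s t : 0 < r <= 1 -> 0 < K -> 0 <= t <= s -> s <= K ->
  r / 8 * K `^ (1 + r) / K ^+ 2 * (s + t) ^+ 2 <=
  s `^ (1 + r) + t `^ (1 + r) - 2 * (2^-1 * (s - t)) `^ (1 + r).
Proof.
move=> rr K0 /andP[t0 ts] sK; have [r0 r1] := andP rr.
have s0 : 0 <= s by lra.
have half0 : 0 <= (2:R)^-1 by lra.
have mid_le : (2^-1 * (s - t)) `^ (1 + r) <= 2^-1 * 2^-1 `^ r * s `^ (1 + r).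
  apply: (@le_trans _ _ ((2^-1 * s) `^ (1 + r))).
    by apply: ge0_ler_powR; rewrite ?nnegrE; lra.
  by rewrite powRM // powR_succ.
have bern := @powR_bernoulli r 2^-1 rr half0.
have tp : 0 <= t `^ (1 + r) by apply: powR_ge0.
have L := @sqr_powR_le (1 + r) s K (ltac:(apply/andP; lra)) (introT andP (conj s0 sK)) K0.
have st : (s + t) ^+ 2 <= 4 * s ^+ 2 by nra.
have K2 : 0 < K ^+ 2 by rewrite exprn_gt0.
set Kp := K `^ (1 + r) in L *; set Sp := s `^ (1 + r) in L mid_le *.
have Kp0 : 0 <= Kp by apply: powR_ge0.
have Sp0 : 0 <= Sp by apply: powR_ge0.
have step1 : r / 8 * Kp / K ^+ 2 * (s + t) ^+ 2 <= r / 2 * (s ^+ 2 * Kp) / K ^+ 2.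
  rewrite -subr_ge0.
  have -> : r / 2 * (s ^+ 2 * Kp) / K ^+ 2 - r / 8 * Kp / K ^+ 2 * (s + t) ^+ 2
     = r / 8 * Kp / K ^+ 2 * (4 * s ^+ 2 - (s + t) ^+ 2) by field; rewrite gt_eqF.
  by apply: mulr_ge0; [apply: divr_ge0; [apply: mulr_ge0 => //; lra | apply: ltW] | lra].
have step2 : r / 2 * (s ^+ 2 * Kp) / K ^+ 2 <= r / 2 * Sp by rewrite ler_pdivrMr //; nra.
have step3 : 2 * (2^-1 * 2^-1 `^ r * Sp) <= (1 - r / 2) * Sp.
  have -> : 2 * (2^-1 * 2^-1 `^ r * Sp) = 2^-1 `^ r * Sp by field.
  by apply: ler_wpM2r => //; lra.
lra.
Qed.

Lemma midpoint_gap_opposite_sign r K x y : 0 < r <= 1 -> 0 < K -> 0 <= x <= K -> - K <= y <= 0 ->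
  r / 8 * K `^ (1 + r) / K ^+ 2 * (x - y) ^+ 2 <=
  `|x| `^ (1 + r) + `|y| `^ (1 + r) - 2 * `|2^-1 * (x + y)| `^ (1 + r).
Proof.
move=> rr K0 /andP[x0 xK] /andP[yK y0].
rewrite (ger0_norm x0) (ler0_norm y0).
have [yx|xy] := lerP (- y) x.
  rewrite ger0_norm; last lra.
  have := @midpoint_gap_opposite_aux r K x (- y) rr K0 (ltac:(apply/andP; lra)) xK.
  by rewrite opprK.
rewrite ler0_norm; last lra.
have := @midpoint_gap_opposite_aux r K (- y) x rr K0 (ltac:(apply/andP; lra)) (ltac:(lra)).
have -> : - (2^-1 * (x + y)) = 2^-1 * (- y - x) by ring.
have -> : (- y + x) ^+ 2 = (x - y) ^+ 2 by ring.
lra.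
Qed.

Lemma midpoint_gap r K x y : 0 < r <= 1 -> 0 < K -> `|x| <= K -> `|y| <= K ->
  r ^+ 2 / 8 * K `^ (1 + r) / K ^+ 2 * (x - y) ^+ 2 <=
  `|x| `^ (1 + r) + `|y| `^ (1 + r) - 2 * `|2^-1 * (x + y)| `^ (1 + r).
Proof.
move=> rr K0 xK yK; have [r0 r1] := andP rr.
have Q0 : 0 <= K `^ (1 + r) / K ^+ 2 by rewrite divr_ge0 ?powR_ge0 ?sqr_ge0.
have weaken c : r ^+ 2 / 8 <= c ->
    r ^+ 2 / 8 * K `^ (1 + r) / K ^+ 2 * (x - y) ^+ 2 <=
    c * K `^ (1 + r) / K ^+ 2 * (x - y) ^+ 2.
  move=> rc; rewrite -subr_ge0.
  have -> : c * K `^ (1 + r) / K ^+ 2 * (x - y) ^+ 2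
      - r ^+ 2 / 8 * K `^ (1 + r) / K ^+ 2 * (x - y) ^+ 2
    = (c - r ^+ 2 / 8) * (K `^ (1 + r) / K ^+ 2 * (x - y) ^+ 2) by ring.
  by apply: mulr_ge0; [lra | apply: mulr_ge0 => //; apply: sqr_ge0].
have same := weaken (r ^+ 2 / 4) (ltac:(nra)).
have mixed := weaken (r / 8) (ltac:(nra)).
move: xK yK; rewrite !ler_norml => /andP[xK1 xK2] /andP[yK1 yK2].
have [x0|x0] := lerP 0 x; have [y0|y0] := lerP 0 y.
- apply: le_trans same _.
  rewrite (ger0_norm x0) (ger0_norm y0) ger0_norm; last lra.
  by apply: midpoint_gap_same_sign => //; apply/andP; lra.
- by apply: le_trans mixed _; apply: midpoint_gap_opposite_sign => //; apply/andP; lra.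
- apply: le_trans mixed _.
  have -> : (x - y) ^+ 2 = (y - x) ^+ 2 by ring.
  rewrite (addrC x) (addrC (`|x| `^ (1 + r))).
  by apply: midpoint_gap_opposite_sign => //; apply/andP; lra.
- apply: le_trans same _.
  rewrite (ltr0_norm x0) (ltr0_norm y0) ltr0_norm; last lra.
  have -> : (x - y) ^+ 2 = (- x - - y) ^+ 2 by ring.
  have -> : - (2^-1 * (x + y)) = 2^-1 * (- x + - y) by ring.
  by apply: midpoint_gap_same_sign => //; apply/andP; lra.
Qed.

End ScalarConvexity.

Section InnerProduct.
Variables (R : realType) (V : lmodType R) (ip : V -> V -> R) (hV : hilbert ip).
Local Notation N := (hnorm ip).

Lemma ip0l z : ip 0 z = 0.
Proof. by have := ip_linl hV 1 0 0 z; rewrite scaler0 addr0 mul1r; lra. Qed.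
Lemma ipDl x y z : ip (x + y) z = ip x z + ip y z.
Proof. by have := ip_linl hV 1 x y z; rewrite scale1r mul1r. Qed.
Lemma ipZl a x z : ip (a *: x) z = a * ip x z.
Proof. by have := ip_linl hV a x 0 z; rewrite !addr0 ip0l addr0. Qed.
Lemma ipNl x z : ip (- x) z = - ip x z.
Proof. by rewrite -scaleN1r ipZl mulN1r. Qed.
Lemma ipBl x y z : ip (x - y) z = ip x z - ip y z.
Proof. by rewrite ipDl ipNl. Qed.
Lemma ip0r z : ip z 0 = 0.
Proof. by rewrite (ip_sym hV) ip0l. Qed.
Lemma ipDr x y z : ip z (x + y) = ip z x + ip z y.
Proof. by rewrite !(ip_sym hV z) ipDl. Qed.
Lemma ipZr a x z : ip z (a *: x) = a * ip z x.
Proof. by rewrite !(ip_sym hV z) ipZl. Qed.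
Lemma ipNr x z : ip z (- x) = - ip z x.
Proof. by rewrite !(ip_sym hV z) ipNl. Qed.
Lemma ipBr x y z : ip z (x - y) = ip z x - ip z y.
Proof. by rewrite !(ip_sym hV z) ipBl. Qed.

Lemma ip_suml (J : Type) (r : seq J) (F : J -> V) z :
  ip (\sum_(i <- r) F i) z = \sum_(i <- r) ip (F i) z.
Proof.
elim: r => [|a r IH]; first by rewrite !big_nil ip0l.
by rewrite !big_cons ipDl IH.
Qed.

Lemma ip_sumr (J : Type) (r : seq J) (F : J -> V) z :
  ip z (\sum_(i <- r) F i) = \sum_(i <- r) ip z (F i).
Proof. by rewrite (ip_sym hV) ip_suml; apply: eq_bigr => i _; apply: ip_sym. Qed.

Lemma hnorm_ge0 x : 0 <= N x.
Proof. exact: sqrtr_ge0. Qed.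

Lemma hnorm_sqr x : N x ^+ 2 = ip x x.
Proof. by rewrite /hnorm sqr_sqrtr // ip_ge0. Qed.

Lemma cauchy_schwarz x y : ip x y ^+ 2 <= ip x x * ip y y.
Proof.
have [y0|yn0] := eqVneq (ip y y) 0.
  have -> : y = 0 by apply: (ip_def hV).
  by rewrite ip0r expr0n /= ip0r mulr0.
have yp : 0 < ip y y by rewrite lt_neqAle eq_sym yn0 ip_ge0.
set t := ip x y / ip y y.
have := ip_ge0 hV (x - t *: y).
rewrite ipBl !ipBr !ipZl !ipZr (ip_sym hV y x).
have -> : ip x x - t * ip x y - (t * ip x y - t * (t * ip y y))
   = ip x x - ip x y ^+ 2 / ip y y by rewrite /t; field; rewrite gt_eqF.
by rewrite subr_ge0 ler_pdivrMr.
Qed.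

Lemma abs_ip_le x y : `|ip x y| <= N x * N y.
Proof.
rewrite /hnorm -sqrtrM ?ip_ge0 // -sqrtr_sqr.
exact/ler_wsqrtr/cauchy_schwarz.
Qed.

Lemma hnorm_triangle x y : N (x + y) <= N x + N y.
Proof.
have h : ip (x + y) (x + y) <= (N x + N y) ^+ 2.
  rewrite ipDl !ipDr (ip_sym hV y x) sqrrD !hnorm_sqr.
  by have := abs_ip_le x y; rewrite ler_norml => /andP[_]; lra.
rewrite {1}/hnorm; apply: le_trans (ler_wsqrtr h) _.
by rewrite sqrtr_sqr ger0_norm // addr_ge0 // hnorm_ge0.
Qed.

Lemma hnorm_distC x y : N (x - y) = N (y - x).
Proof. by rewrite /hnorm -opprB ipNl ipNr opprK. Qed.

Lemma hnorm_dist_triangle x y z : N (x - y) <= N (x - z) + N (y - z).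
Proof.
rewrite (hnorm_distC y z); apply: le_trans (hnorm_triangle _ _).
by rewrite addrA subrK.
Qed.

End InnerProduct.

Section Archimedean.
Variable R : realType.

Lemma inv_succ_lt (e : R) : 0 < e -> exists N0 : nat, forall n, (N0 <= n)%N -> n.+1%:R^-1 < e.
Proof.
move=> e0; exists (Num.truncn e^-1) => n Nn.
have h : e^-1 < n.+1%:R.
  by apply: lt_le_trans (truncnS_gt _) _; rewrite ler_nat.
by rewrite -(invrK e) ltf_pV2 ?posrE ?invr_gt0.
Qed.

End Archimedean.

Section Expansion.
Variables (R : realType) (V : lmodType R) (ip : V -> V -> R) (hV : hilbert ip).
Variables (I : choiceType) (phi : I -> V) (hphi : orthonormal_basis ip phi).
Local Notation N := (hnorm ip).

Definition coef v i := ip v (phi i).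
Definition partial v (r : seq I) := \sum_(i <- r) coef v i *: phi i.
Definition coef_sqr_sum v (r : seq I) := \sum_(i <- r) coef v i ^+ 2.

Lemma ip_partial_phi v r j : uniq r ->
  ip (partial v r) (phi j) = if j \in r then coef v j else 0.
Proof.
rewrite /partial ip_suml //.
elim: r => [|a r IH]; first by rewrite big_nil.
rewrite big_cons /= => /andP[ar ur].
rewrite ipZl // hphi.1 IH // in_cons.
have [->|ja] := eqVneq j a; first by rewrite (negbTE ar) mulr1 addr0.
by rewrite mulr0 add0r.
Qed.

Lemma ip_partial_partial v r t : uniq r -> uniq t -> {subset r <= t} ->
  ip (partial v t) (partial v r) = coef_sqr_sum v r.
Proof.
move=> ur ut rt; rewrite {2}/partial ip_sumr // /coef_sqr_sum big_seq [RHS]big_seq.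
by apply: eq_bigr => i ri; rewrite ipZr // ip_partial_phi // rt // expr2.
Qed.

Lemma ip_partial v r : ip v (partial v r) = coef_sqr_sum v r.
Proof. by rewrite /partial ip_sumr //; apply: eq_bigr => i _; rewrite ipZr // expr2. Qed.

Lemma bessel v r : uniq r -> N (v - partial v r) ^+ 2 = ip v v - coef_sqr_sum v r.
Proof.
move=> ur; rewrite hnorm_sqr // ipBl // !ipBr // ip_partial (ip_sym hV (partial v r)).
by rewrite ip_partial ip_partial_partial //; lra.
Qed.

Lemma partial_dist v r t : uniq r -> uniq t -> {subset r <= t} ->
  N (partial v t - partial v r) ^+ 2 = coef_sqr_sum v t - coef_sqr_sum v r.
Proof.
move=> ur ut rt; rewrite hnorm_sqr // ipBl // !ipBr // (ip_sym hV (partial v r)).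
by rewrite !ip_partial_partial //; lra.
Qed.

Lemma coef_sqr_sum_sub v r t : uniq r -> uniq t -> {subset r <= t} ->
  coef_sqr_sum v r <= coef_sqr_sum v t.
Proof. by move=> ur ut rt; rewrite -subr_ge0 -partial_dist // sqr_ge0. Qed.

Lemma ip_residual_phi v r j : uniq r ->
  ip (v - partial v r) (phi j) = if j \in r then 0 else coef v j.
Proof. by move=> ur; rewrite ipBl // ip_partial_phi //; case: ifP; rewrite ?subrr ?subr0. Qed.

Lemma hnorm_phi j : N (phi j) = 1.
Proof. by rewrite /hnorm hphi.1 eqxx sqrtr1. Qed.

End Expansion.

(* Parseval's inequality ||v||^2 <= sum_i <v, phi_i>^2 for an orthonormal basis.
   Finite partial expansions along an exhausting chain of index lists form a
   Cauchy sequence; its limit has the same coefficients as v, hence equals v. *)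
Section Parseval.
Variables (R : realType) (V : lmodType R) (ip : V -> V -> R) (hV : hilbert ip).
Variables (I : choiceType) (phi : I -> V) (hphi : orthonormal_basis ip phi).
Local Notation N := (hnorm ip).
Local Notation coef := (coef ip phi).
Local Notation partial := (partial ip phi).
Local Notation Sq := (coef_sqr_sum ip phi).

Section SupremumOfPartialSums.
Variables (v : V) (s : R).
Hypothesis Sq_le : forall r, uniq r -> Sq v r <= s.
Hypothesis Sq_approx : forall e, 0 < e -> exists r, uniq r /\ s - e < Sq v r.

Lemma exhausting_chain : exists G : nat -> seq I,
  [/\ forall n, uniq (G n), forall n k, (n <= k)%N -> {subset G n <= G k} &
      forall n, s - n.+1%:R^-1 < Sq v (G n)].
Proof.
have approx n : exists r, uniq r /\ s - n.+1%:R^-1 < Sq v r.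
  by apply: Sq_approx; rewrite invr_gt0.
have [F HF] := choice approx.
pose G := fix G n := if n is n'.+1 then undup (G n' ++ F n'.+1) else F 0%N.
have Gu n : uniq (G n) by case: n => [|n] /=; [exact: (HF 0%N).1 | exact: undup_uniq].
have FG n : {subset F n <= G n}.
  by case: n => [|n] //= i; rewrite mem_undup mem_cat => ->; rewrite orbT.
have GS n k : {subset G n <= G (n + k)%N}.
  elim: k => [|k IH]; first by rewrite addn0.
  by move=> i /IH Gi; rewrite addnS /= mem_undup mem_cat Gi.
exists G; split => // [n k nk|n]; first by rewrite -(subnKC nk).
by apply: lt_le_trans (HF n).2 _; apply: coef_sqr_sum_sub (HF n).1 (Gu n) (FG n).
Qed.

Section Chain.
Variable G : nat -> seq I.
Hypothesis G_uniq : forall n, uniq (G n).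
Hypothesis G_mono : forall n k, (n <= k)%N -> {subset G n <= G k}.
Hypothesis G_sum : forall n, s - n.+1%:R^-1 < Sq v (G n).

Lemma chain_cauchy e : 0 < e -> exists N0, forall n k, (N0 <= n)%N -> (N0 <= k)%N ->
  N (partial v (G n) - partial v (G k)) < e.
Proof.
move=> e0; have [N0 HN] := inv_succ_lt (exprn_gt0 2 e0).
have ordered n k : (N0 <= n)%N -> (n <= k)%N -> N (partial v (G k) - partial v (G n)) < e.
  move=> Nn nk; rewrite -(ltr_pXn2r (n:=2)) ?nnegrE ?hnorm_ge0 ?(ltW e0) //.
  rewrite partial_dist //; last exact: G_mono.
  have := G_sum n; have := Sq_le (G_uniq k); have := HN n Nn.
  move: (Sq v (G k)) (Sq v (G n)) (n.+1%:R^-1) => a b d; lra.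
exists N0 => n k Nn Nk; have [kn|nk] := leqP k n; first exact: ordered.
by rewrite hnorm_distC //; apply: ordered (ltnW nk).
Qed.

Lemma coef_outside_chain n j : j \notin G n -> coef v j ^+ 2 < n.+1%:R^-1.
Proof.
move=> jG; have jGu : uniq (j :: G n) by rewrite /= jG G_uniq.
have := Sq_le jGu; rewrite /coef_sqr_sum big_cons -/(Sq v (G n)).
have := G_sum n; move: (Sq v (G n)) (n.+1%:R^-1) => a d; lra.
Qed.

Lemma chain_limit_is_v l :
  (forall e, 0 < e -> exists N0, forall n, (N0 <= n)%N -> N (partial v (G n) - l) < e) ->
  l = v.
Proof.
move=> lim; apply/eqP; rewrite eq_sym -subr_eq0; apply/eqP; apply: hphi.2 => j.
apply/eqP; rewrite -normr_le0; apply/ler_addgt0Pr => e e0; rewrite add0r.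
have e20 : 0 < e / 2 by rewrite divr_gt0.
have [N1 H1] := lim _ e20; have [N2 H2] := inv_succ_lt (exprn_gt0 2 e20).
set n := maxn N1 N2.
have -> : ip (v - l) (phi j) =
    ip (v - partial v (G n)) (phi j) + ip (partial v (G n) - l) (phi j).
  by rewrite -ipDl // addrA subrK.
apply: le_trans (ler_normD _ _) _; rewrite [e](splitr e) lerD //.
  rewrite ip_residual_phi //; case: ifPn => jG; first by rewrite normr0 ltW.
  apply: ltW; rewrite -(ltr_pXn2r (n:=2)) ?nnegrE ?normr_ge0 ?(ltW e20) //.
  rewrite real_normK ?num_real //.
  apply: lt_trans (coef_outside_chain jG) _.
  by apply: H2; rewrite leq_maxr.
apply: le_trans (abs_ip_le hV _ _) _; rewrite (hnorm_phi hphi) mulr1 ltW //.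
by apply: H1; rewrite leq_maxl.
Qed.

(* Bessel's identity along the chain then gives ||v||^2 <= s. *)
Lemma chain_norm_le : ip v v <= s.
Proof.
have [l lim] := ip_complete hV chain_cauchy.
have lv := chain_limit_is_v lim; subst l.
apply/ler_addgt0Pr => e e0.
have [n Hn] := lim (Num.sqrt e) (ltac:(by rewrite sqrtr_gt0)).
have close : N (v - partial v (G n)) ^+ 2 < e.
  rewrite -(sqr_sqrtr (ltW e0)) ltr_pXn2r ?nnegrE ?hnorm_ge0 ?sqrtr_ge0 //.
  by rewrite hnorm_distC //; apply: Hn.
rewrite bessel // in close; have := Sq_le (G_uniq n).
move: (Sq v (G n)) close => a; lra.
Qed.

End Chain.

Lemma norm_le_coef_sup : ip v v <= s.
Proof. by have [G [Gu Gm Gs]] := exhausting_chain; apply: (chain_norm_le Gu Gm Gs). Qed.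

End SupremumOfPartialSums.

Lemma esum_coef_sqr_ge c v r : uniq r -> 0 < c ->
  ((c * Sq v r)%:E <= \esum_(i in [set: I]) (c * coef v i ^+ 2)%:E)%E.
Proof.
move=> ur c0; apply: esum_ge; exists [set` r]; first by split; [exact: finite_seq |].
by rewrite -fsbig_seq // sumEFin lee_fin /coef_sqr_sum mulr_sumr.
Qed.

Lemma esum_coef_sqr_approx c v e s : 0 < e ->
  \esum_(i in [set: I]) (c * coef v i ^+ 2)%:E = s%:E ->
  exists r, uniq r /\ s - e < c * Sq v r.
Proof.
move=> e0 Es.
have : ((s - e)%:E < \esum_(i in [set: I]) (c * coef v i ^+ 2)%:E)%E.
  by rewrite Es lte_fin; lra.
rewrite /esum => /ereal_sup_gt [y [A [finA _] <-] hy].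
exists (finite_support 0%E A (fun i => (c * coef v i ^+ 2)%:E)); split => //.
by move: hy; rewrite sumEFin lte_fin /coef_sqr_sum mulr_sumr.
Qed.

Lemma parseval_le c v : 0 < c ->
  ((c * ip v v)%:E <= \esum_(i in [set: I]) (c * coef v i ^+ 2)%:E)%E.
Proof.
move=> c0.
have S0 : (0 <= \esum_(i in [set: I]) (c * coef v i ^+ 2)%:E)%E.
  by apply: esum_ge0 => i _; rewrite lee_fin mulr_ge0 ?sqr_ge0 ?ltW.
move: S0; case E: (\esum_(i in [set: I]) _) => [s| |] S0 //; last by rewrite leey.
rewrite lee_fin -ler_pdivlMl //; apply: norm_le_coef_sup => [r ur|e e0].
  by rewrite ler_pdivlMl // -lee_fin -E esum_coef_sqr_ge.
have [r [ur hr]] := esum_coef_sqr_approx (mulr_gt0 c0 e0) E.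
exists r; split => //.
have -> : c^-1 * s - e = (s - c * e) / c by field; rewrite gt_eqF.
by rewrite ltr_pdivrMr // [_ * c]mulrC.
Qed.

End Parseval.

(* The weighted l^p penalty Phi_p is uniformly convex on bounded sets when
   1 < p <= 2: its midpoint gap dominates a multiple of the squared distance. *)
Section PenaltyConvexity.
Variables (R : realType) (V : lmodType R) (ip : V -> V -> R) (hV : hilbert ip).
Variables (I : choiceType) (phi : I -> V) (hphi : orthonormal_basis ip phi).
Variables (w : I -> R) (hw : forall i, 1 <= w i) (p : R) (hp : 1 < p <= 2).
Local Notation Phi := (Phi_p ip phi w p).
Local Notation coef := (coef ip phi).

(* The modulus of convexity of Phi_p on the set where all coefficients are at most K. *)
Definition convexity_modulus (K : R) := (p - 1) ^+ 2 / 8 * K `^ p / K ^+ 2.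

Lemma convexity_modulus_gt0 K : 0 < K -> 0 < convexity_modulus K.
Proof.
have [p1 _] := andP hp; move=> K0.
by rewrite !divr_gt0 ?mulr_gt0 ?exprn_gt0 ?powR_gt0 ?subr_gt0.
Qed.

Lemma weight_ge0 i : 0 <= w i.
Proof. exact: le_trans ler01 (hw i). Qed.

Lemma Phi_ge0 c : (0 <= Phi c)%E.
Proof. by apply: esum_ge0 => i _; rewrite lee_fin mulr_ge0 ?powR_ge0 ?weight_ge0. Qed.

Lemma Phi_ge_term c i : ((w i * `|coef c i| `^ p)%:E <= Phi c)%E.
Proof.
apply: esum_ge; exists [set i]; first by split; [exact: finite_set1 |].
by rewrite fsbig_set1.
Qed.

Lemma Phi_coef_bound c K : 1 <= K -> (Phi c <= K%:E)%E -> forall i, `|coef c i| <= K.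
Proof.
move=> K1 hK i; have [p1 _] := andP hp.
have term := le_trans (Phi_ge_term c i) hK; rewrite lee_fin in term.
have powK : `|coef c i| `^ p <= K.
  apply: le_trans term; rewrite -{1}(mul1r (_ `^ p)).
  by apply: ler_wpM2r; [apply: powR_ge0 | apply: hw].
have [small|big] := lerP `|coef c i| 1; first exact: le_trans small K1.
by apply: le_trans powK; apply: le1r_powR; apply: ltW.
Qed.

Lemma Phi_term_midpoint K a b i : 0 < K -> `|coef a i| <= K -> `|coef b i| <= K ->
  w i * `|coef (2^-1 *: (a + b)) i| `^ p + w i * `|coef (2^-1 *: (a + b)) i| `^ p
  + convexity_modulus K * coef (a - b) i ^+ 2
  <= w i * `|coef a i| `^ p + w i * `|coef b i| `^ p.
Proof.
move=> K0 ha hb; have [p1 p2] := andP hp.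
have rr : 0 < p - 1 <= 1 by apply/andP; lra.
have gap := midpoint_gap rr K0 ha hb.
have pE : 1 + (p - 1) = p by ring.
rewrite pE in gap.
rewrite /coef (ipZl hV) (ipDl hV) (ipBl hV) -/(coef a i) -/(coef b i).
rewrite -/(convexity_modulus K) in gap.
have := mulr_ge0 (ltW (convexity_modulus_gt0 K0)) (sqr_ge0 (coef a i - coef b i)).
have := hw i.
move: gap; set A := `|coef a i| `^ p; set B := `|coef b i| `^ p.
set M := `|2^-1 * (coef a i + coef b i)| `^ p; set Q := convexity_modulus K * _.
move=> gap w1 Q0.
have : w i * (A + B - 2 * M) >= A + B - 2 * M by rewrite ler_peMl //; lra.
nra.
Qed.

Lemma Phi_midpoint K a b : 0 < K ->
  (forall i, `|coef a i| <= K) -> (forall i, `|coef b i| <= K) ->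
  (Phi (2^-1 *: (a + b)) + Phi (2^-1 *: (a + b)) +
   \esum_(i in [set: I]) (convexity_modulus K * coef (a - b) i ^+ 2)%:E
   <= Phi a + Phi b)%E.
Proof.
move=> K0 ha hb.
have Q0 := ltW (convexity_modulus_gt0 K0).
have term_ge0 c i : (0 <= (w i * `|coef c i| `^ p)%:E)%E.
  by rewrite lee_fin mulr_ge0 ?powR_ge0 ?weight_ge0.
rewrite /Phi_p -!esumD.
- by apply: le_esum => i _; rewrite -!EFinD lee_fin; apply: Phi_term_midpoint.
all: by move=> i _; rewrite ?adde_ge0 ?term_ge0 // lee_fin mulr_ge0 ?sqr_ge0.
Qed.

(* Uniform convexity of Phi_p on coefficient-bounded sets, via Parseval. *)
Lemma Phi_uniform_convexity K a b : 0 < K ->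
  (forall i, `|coef a i| <= K) -> (forall i, `|coef b i| <= K) ->
  (Phi (2^-1 *: (a + b)) + Phi (2^-1 *: (a + b)) +
   (convexity_modulus K * ip (a - b) (a - b))%:E <= Phi a + Phi b)%E.
Proof.
move=> K0 ha hb; apply: le_trans _ (Phi_midpoint K0 ha hb); apply: leeD => //.
by have := parseval_le hV hphi (a - b) (convexity_modulus_gt0 K0).
Qed.

End PenaltyConvexity.

Section BregmanLowerBound.
Variables (R : realType) (X Y : lmodType R) (ipX : X -> X -> R) (ipY : Y -> Y -> R).
Variables (hX : hilbert ipX) (hY : hilbert ipY).
Variables (I : choiceType) (phi : I -> X) (hphi : orthonormal_basis ipX phi).
Variables (w : I -> R) (hw : forall i, 1 <= w i) (p : R) (hp : 1 < p <= 2).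
Variable G : Y -> R.
Local Notation Phi := (Phi_p ipX phi w p).

Definition split_fun (cs : X * Y) : \bar R := (Phi cs.1 + (G cs.2)%:E)%E.

Lemma Phi_finite c K : (Phi c <= K%:E)%E -> exists r, Phi c = r%:E.
Proof.
by move: (Phi_ge0 ipX phi hw p c); case: (Phi c) => [r _ _| |] //; exists r.
Qed.

(* Main estimate: compare Rtilde at the midpoint of ca and cst, and at (cst, sa), with
   the subgradient inequality, and use the uniform convexity of Phi_p. *)
Lemma bregman_ge_sqr_dist K xi cst sst ca sa : 1 <= K ->
  subgradient (ip_prod ipX ipY) split_fun (cst, sst) xi ->
  (Phi ca <= K%:E)%E -> (Phi cst <= K%:E)%E ->
  ((convexity_modulus p K * ipX (ca - cst) (ca - cst))%:E
     <= bregman (ip_prod ipX ipY) split_fun xi (ca, sa) (cst, sst))%E.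
Proof.
move=> K1 [_ sub] hKa hKs; have K0 : 0 < K := lt_le_trans ltr01 K1.
have [phia Ea] := Phi_finite hKa; have [phis Es] := Phi_finite hKs.
set mid := 2^-1 *: (ca + cst).
have conv := Phi_uniform_convexity hX hphi hw hp K0
  (Phi_coef_bound hw hp K1 hKa) (Phi_coef_bound hw hp K1 hKs).
have sub_mid := sub (mid, sst); have sub_s := sub (cst, sa).
rewrite /bregman /split_fun /ip_prod /= -/mid Ea Es in conv sub_mid sub_s *.
rewrite (subrr sst) (ip0r hY) addr0 /mid (ipBr hX) (ipZr hX) (ipDr hX) in sub_mid.
rewrite (subrr cst) (ip0r hX) add0r in sub_s.
move: conv sub_mid; case: (Phi mid) (Phi_ge0 ipX phi hw p mid) => [phim _| |] //.
move=> conv sub_mid; rewrite -!EFinD !lee_fin in conv sub_mid sub_s *.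
set N2 := convexity_modulus p K * _ in conv *.
rewrite !(ipBr hX) !(ipBr hY) in sub_s *; lra.
Qed.

End BregmanLowerBound.

(* Throughout, ra, ta are the residuals of the regularized solution, r0 <= delta,
   t0 <= eps those of the exact solution, and alpha ~ delta + eps. *)
Section EnergyEstimates.
Variable R : realType.

(* Comparing energies bounds the regularization value of the minimizer. *)
Lemma minimizer_value_bound (gamma m alpha delta eps ra ta r0 t0 rt rs : R) :
  0 < gamma -> 0 < m -> 0 < alpha -> 0 <= delta -> 0 <= eps -> delta + eps < 1 ->
  m * (delta + eps) <= alpha -> 0 <= r0 <= delta -> 0 <= t0 <= eps ->
  1 / 2 * ra ^+ 2 + gamma / 2 * ta ^+ 2 + alpha * rt <=
  1 / 2 * r0 ^+ 2 + gamma / 2 * t0 ^+ 2 + alpha * rs ->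
  rt <= (1 + gamma) / (2 * m) + rs.
Proof.
move=> g0 m0 a0 d0 e0 h1 mha /andP[r00 r0d] /andP[t00 t0e] energy.
have r0h : r0 ^+ 2 <= delta + eps by nra.
have t0h : t0 ^+ 2 <= delta + eps by nra.
have noise : 1 / 2 * r0 ^+ 2 + gamma / 2 * t0 ^+ 2 <= (1 + gamma) / 2 * (delta + eps) by nra.
have alpha_ge : (1 + gamma) / 2 * (delta + eps) <= alpha * ((1 + gamma) / (2 * m)).
  rewrite -subr_ge0.
  have -> : alpha * ((1 + gamma) / (2 * m)) - (1 + gamma) / 2 * (delta + eps)
    = (1 + gamma) / (2 * m) * (alpha - m * (delta + eps)) by field; rewrite gt_eqF.
  by rewrite mulr_ge0 ?subr_ge0 // divr_ge0 //; lra.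
have : alpha * rt <= alpha * ((1 + gamma) / (2 * m) + rs) by nra.
by rewrite ler_pM2l.
Qed.

(* Young's inequality absorbing ka (ta + eps)^2 into the fidelity term gamma/2 ta^2. *)
Lemma absorb_sqr (gamma ka ka0 ta eps : R) : 0 <= ka <= ka0 -> ka0 < gamma / 2 ->
  ka * (ta + eps) ^+ 2 <= gamma / 2 * ta ^+ 2 + (ka0 + ka0 ^+ 2 / (gamma / 2 - ka0)) * eps ^+ 2.
Proof.
move=> /andP[ka_0 kka] kag; have ka00 : 0 <= ka0 := le_trans ka_0 kka.
set g1 := gamma / 2 - ka0; have g10 : 0 < g1 by rewrite /g1 subr_gt0.
have cross : 2 * ka * ta * eps <= g1 * ta ^+ 2 + ka ^+ 2 / g1 * eps ^+ 2.
  rewrite -subr_ge0.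
  have -> : g1 * ta ^+ 2 + ka ^+ 2 / g1 * eps ^+ 2 - 2 * ka * ta * eps =
     (g1 * ta - ka * eps) ^+ 2 / g1 by field; rewrite gt_eqF.
  by rewrite divr_ge0 ?sqr_ge0 // ltW.
have ka2 : ka ^+ 2 / g1 * eps ^+ 2 <= ka0 ^+ 2 / g1 * eps ^+ 2.
  by rewrite ler_wpM2r ?sqr_ge0 // ler_pM2r ?invr_gt0 // ler_sqr ?nnegrE.
have -> : gamma / 2 * ta ^+ 2 = ka0 * ta ^+ 2 + g1 * ta ^+ 2 by rewrite /g1; ring.
have : ka * ta ^+ 2 <= ka0 * ta ^+ 2 by rewrite ler_wpM2r ?sqr_ge0.
have : ka * eps ^+ 2 <= ka0 * eps ^+ 2 by rewrite ler_wpM2r ?sqr_ge0.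
have -> : ka * (ta + eps) ^+ 2 = ka * ta ^+ 2 + 2 * ka * ta * eps + ka * eps ^+ 2 by ring.
have -> : (ka0 + ka0 ^+ 2 / g1) * eps ^+ 2 = ka0 * eps ^+ 2 + ka0 ^+ 2 / g1 * eps ^+ 2 by ring.
lra.
Qed.

(* Energy comparison plus the source condition bound the Bregman distance
   rt - rs - L quadratically in the noise levels; here rt, rs are the values of the
   regularization functional at the regularized and the exact solution, L the dual
   pairing of the subgradient with their difference, and e, f the distances of the
   two solutions in data and in the second component. *)
Lemma bregman_energy_bound (alpha gamma k1 k2 k3 ka0 delta eps ra ta r0 t0 e f rt rs L : R) :
  0 < alpha -> 0 <= k1 < 1 -> 0 <= k2 -> 0 <= k3 ->
  alpha * k3 <= ka0 -> ka0 < gamma / 2 ->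
  0 <= r0 <= delta -> 0 <= t0 <= eps -> 0 <= ta -> e <= ra + r0 -> 0 <= f -> f <= ta + t0 ->
  1 / 2 * ra ^+ 2 + gamma / 2 * ta ^+ 2 + alpha * rt <=
    1 / 2 * r0 ^+ 2 + gamma / 2 * t0 ^+ 2 + alpha * rs ->
  - L <= k1 * (rt - rs - L) + (k2 * e + k3 * f ^+ 2) ->
  alpha * (1 - k1) * (rt - rs - L) <=
  delta ^+ 2 / 2 + gamma / 2 * eps ^+ 2 + alpha * k2 * delta + (alpha * k2) ^+ 2 / 2
  + (ka0 + ka0 ^+ 2 / (gamma / 2 - ka0)) * eps ^+ 2.
Proof.
move=> a0 /andP[k10 k11] k20 k30 kka kag /andP[r00 r0d] /andP[t00 t0e] ta0 eb f0 fb energy src.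
set D := rt - rs - L.
set ka := alpha * k3; have ka0' : 0 <= ka by rewrite mulr_ge0 // ltW.
have ka00 : 0 <= ka0 := le_trans ka0' kka.
have src' : - (alpha * L) <= k1 * (alpha * D) + (alpha * k2 * e + ka * f ^+ 2).
  have -> : k1 * (alpha * D) + (alpha * k2 * e + ka * f ^+ 2) =
    alpha * (k1 * D + (k2 * e + k3 * f ^+ 2)) by rewrite /ka; ring.
  by rewrite -mulrN; apply: ler_wpM2l => //; apply: ltW.
have eD : alpha * D = alpha * rt - alpha * rs - alpha * L by rewrite /D; ring.
have data : alpha * k2 * e <= alpha * k2 * ra + alpha * k2 * delta.
  by rewrite -mulrDr; apply: ler_wpM2l; [rewrite mulr_ge0 // ltW | lra].
have second : ka * f ^+ 2 <= ka * (ta + eps) ^+ 2.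
  by apply: ler_wpM2l => //; rewrite ler_sqr ?nnegrE; lra.
have absorb := @absorb_sqr gamma ka ka0 ta eps (introT andP (conj ka0' kka)) kag.
have data_sq : alpha * k2 * ra - ra ^+ 2 / 2 <= (alpha * k2) ^+ 2 / 2.
  by have := sqr_ge0 (ra - alpha * k2); lra.
have r0sq : r0 ^+ 2 <= delta ^+ 2 by rewrite ler_sqr ?nnegrE //; lra.
have t0sq : gamma / 2 * t0 ^+ 2 <= gamma / 2 * eps ^+ 2.
  by apply: ler_wpM2l; [lra | rewrite ler_sqr ?nnegrE; lra].
have -> : alpha * (1 - k1) * D = alpha * D - k1 * (alpha * D) by ring.
lra.
Qed.

Lemma bregman_rate_bound (m M k1 k2 K1 gamma delta eps h alpha D : R) :
  0 < m -> m <= M -> 0 <= k1 < 1 -> 0 <= k2 -> 0 <= K1 -> 0 < gamma ->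
  0 <= delta <= h -> 0 <= eps <= h -> 0 < alpha -> m * h <= alpha -> alpha <= M * h ->
  alpha * (1 - k1) * D <=
  delta ^+ 2 / 2 + gamma / 2 * eps ^+ 2 + alpha * k2 * delta + (alpha * k2) ^+ 2 / 2
  + K1 * eps ^+ 2 ->
  D <= (1 / 2 + gamma / 2 + K1 + M * k2 + M ^+ 2 * k2 ^+ 2 / 2) / (m * (1 - k1)) * h.
Proof.
move=> m0 mM /andP[k10 k11] k20 K10 g0 /andP[d0 dh] /andP[e0 eh] a0 mha aMh energy.
set K3 := 1 / 2 + gamma / 2 + K1 + M * k2 + M ^+ 2 * k2 ^+ 2 / 2.
have Mk2 : 0 <= M * k2 by rewrite mulr_ge0 //; lra.
have mk : 0 < m * (1 - k1) by rewrite mulr_gt0 // subr_gt0.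
have [D0|D0] := lerP D 0.
  apply: le_trans D0 _; apply: mulr_ge0; last lra.
  apply: divr_ge0; last exact: ltW.
  by rewrite /K3; have := sqr_ge0 (M * k2); rewrite exprMn; lra.
have ak2 : alpha * k2 <= M * h * k2 by rewrite ler_wpM2r.
have a0' := ltW a0.
have ak2sq : (alpha * k2) ^+ 2 <= (M * h * k2) ^+ 2.
  by rewrite ler_sqr ?nnegrE ?mulr_ge0 //; lra.
have noise : alpha * (1 - k1) * D <= K3 * h ^+ 2.
  apply: le_trans energy _; rewrite /K3.
  have : delta ^+ 2 <= h ^+ 2 by rewrite ler_sqr ?nnegrE //; lra.
  have : eps ^+ 2 <= h ^+ 2 by rewrite ler_sqr ?nnegrE //; lra.
  have : alpha * k2 * delta <= M * h * k2 * h.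
    by apply: le_trans (ler_wpM2r d0 ak2) _; apply: ler_wpM2l => //; rewrite mulrAC mulr_ge0 //; lra.
  have : gamma / 2 * eps ^+ 2 <= gamma / 2 * h ^+ 2.
    by apply: ler_wpM2l; [lra | rewrite ler_sqr ?nnegrE //; lra].
  have : K1 * eps ^+ 2 <= K1 * h ^+ 2 by apply: ler_wpM2l => //; rewrite ler_sqr ?nnegrE //; lra.
  move: ak2sq; rewrite !exprMn; nra.
have : m * h * (1 - k1) * D <= K3 * h ^+ 2.
  apply: le_trans noise; apply: ler_wpM2r; first exact: ltW.
  by apply: ler_wpM2r => //; lra.
have h0 : 0 < h by have := lt_le_trans a0 aMh; rewrite pmulr_rgt0 //; lra.
have -> : m * h * (1 - k1) * D = (m * (1 - k1) * D) * h by ring.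
rewrite expr2 mulrA ler_pM2r // => bound.
by rewrite mulrAC ler_pdivlMr // (mulrC D).
Qed.

Lemma sqrt_rate (cc K h x : R) : 0 < cc -> 0 <= K -> cc * x <= K * h ->
  Num.sqrt x <= Num.sqrt (K / cc) * Num.sqrt h.
Proof.
move=> cc0 K0 bound; rewrite -sqrtrM; last by rewrite divr_ge0 // ltW.
by apply: ler_wsqrtr; rewrite mulrAC ler_pdivlMr // mulrC.
Qed.

End EnergyEstimates.

Section ConvergenceRate.
Variables (R : realType) (X Y Z : lmodType R).
Variables (ipX : X -> X -> R) (ipY : Y -> Y -> R) (ipZ : Z -> Z -> R).
Hypotheses (hX : hilbert ipX) (hY : hilbert ipY) (hZ : hilbert ipZ).
Variables (B : X -> Y -> Z) (P : Y -> Y) (scal : Y) (Rs : Y -> R).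
Hypothesis hRs0 : forall s, 0 <= Rs s.
Variables (I : choiceType) (phi : I -> X) (w : I -> R) (p : R).
Hypotheses (hphi : orthonormal_basis ipX phi) (hw : forall i, 1 <= w i) (hp : 1 < p <= 2).
Variables (gamma nu1 nu2 : R).
Hypotheses (hgamma : 0 < gamma) (hnu1 : 0 < nu1) (hnu2 : 0 < nu2).
Variables (cst : X) (sst : Y) (alpha_max k1 k2 k3 : R).
Hypotheses (halpha_max : 0 < alpha_max) (hk1 : 0 <= k1 < 1) (hk2 : 0 <= k2) (hk3 : 0 <= k3).
Hypothesis hka0 : alpha_max * k3 < gamma / 2.
Variable xi : X * Y.
Local Notation Phi := (Phi_p ipX phi w p).
Local Notation Rt := (Rtilde ipX ipY phi w p P scal Rs nu1 nu2).
Local Notation breg := (bregman (ip_prod ipX ipY) Rt xi).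
Hypothesis hxi : subgradient (ip_prod ipX ipY) Rt (cst, sst) xi.
Hypothesis hsrc : forall c s,
  ((ip_prod ipX ipY xi ((cst, sst) - (c, s)))%:E <= k1%:E * breg (c, s) (cst, sst)
    + (k2 * hnorm ipZ (B c s - B cst sst) + k3 * hnorm ipY (s - sst) ^+ 2)%:E)%E.
Variables (m M : R).
Hypotheses (hm : 0 < m) (hmM : m <= M).

Definition penalty_s (s : Y) := nu2 / 2 * hnorm ipY (P s - scal) ^+ 2 + nu1 * Rs s.

Lemma penalty_s_ge0 s : 0 <= penalty_s s.
Proof.
have := hnu1; have := hnu2 => *.
by apply: addr_ge0; apply: mulr_ge0; [lra | exact: sqr_ge0 | lra | exact: hRs0].
Qed.

Lemma Phi_le_Rtilde c s : (Phi c <= Rt (c, s))%E.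
Proof. by apply: leeDl; rewrite lee_fin penalty_s_ge0. Qed.

Lemma Jfun_split u sm alpha c s :
  Jfun ipX ipY ipZ B phi w p P scal Rs gamma u sm alpha (nu1 * alpha) (nu2 * alpha) (c, s)
  = ((1 / 2 * hnorm ipZ (B c s - u) ^+ 2 + gamma / 2 * hnorm ipY (s - sm) ^+ 2)%:E
     + alpha%:E * Rt (c, s))%E.
Proof.
rewrite /Jfun /Rtilde /= ge0_muleDr ?Phi_ge0 ?lee_fin ?penalty_s_ge0 //.
rewrite addeA addeAC -EFinM -EFinD; congr (_%:E + _).
by rewrite /penalty_s; ring.
Qed.

(* The value of Rtilde at the exact solution is finite. *)
Definition R_star := fine (Rt (cst, sst)).

Lemma R_starE : Rt (cst, sst) = R_star%:E.
Proof. by rewrite /R_star fineK //; case: hxi. Qed.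

(* A bound K >= 1 on Phi_p at both the exact and every regularized solution. *)
Definition Phi_bound := Num.max 1 ((1 + gamma) / (2 * m) + R_star).

Lemma Phi_bound_ge1 : 1 <= Phi_bound.
Proof. by rewrite le_max lexx. Qed.

Lemma Phi_star_le : (Phi cst <= Phi_bound%:E)%E.
Proof.
apply: le_trans (Phi_le_Rtilde cst sst) _; rewrite R_starE lee_fin.
rewrite le_max; apply/orP; right; rewrite lerDr.
by apply: divr_ge0; [rewrite addr_ge0 // ltW | rewrite mulr_ge0 // ltW].
Qed.

Definition ka0 := alpha_max * k3.
Definition bregman_const :=
  (1 / 2 + gamma / 2 + (ka0 + ka0 ^+ 2 / (gamma / 2 - ka0)) + M * k2 + M ^+ 2 * k2 ^+ 2 / 2)
  / (m * (1 - k1)).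

Lemma ka0_ge0 : 0 <= ka0.
Proof. by rewrite mulr_ge0 // ltW. Qed.

Lemma bregman_const_ge0 : 0 <= bregman_const.
Proof.
have [k10 k11] := andP hk1; have g0 := hgamma; have m0 := hm.
have lt : ka0 < gamma / 2 := hka0; have ge := ka0_ge0.
have Mk2 : 0 <= M * k2 := mulr_ge0 (le_trans (ltW hm) hmM) hk2.
have sq : 0 <= M ^+ 2 * k2 ^+ 2 / 2 by rewrite -exprMn divr_ge0 ?sqr_ge0.
have frac : 0 <= ka0 ^+ 2 / (gamma / 2 - ka0) by rewrite divr_ge0 ?sqr_ge0 // subr_ge0 ltW.
apply: divr_ge0; last by apply: mulr_ge0; lra.
lra.
Qed.

(* The constant of the final rate ||c^alpha - cst|| <= rate_const sqrt(delta + eps). *)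
Definition rate_const := Num.sqrt (bregman_const / convexity_modulus p Phi_bound).

Section Minimizer.
Variables (delta eps : R) (ud : Z) (sm : Y) (alpha : R) (ca : X) (sa : Y).
Hypotheses (hd : 0 <= delta) (he : 0 <= eps) (hsmall : delta + eps < 1).
Hypotheses (hud : hnorm ipZ (B cst sst - ud) <= delta) (hsm : hnorm ipY (sst - sm) <= eps).
Hypotheses (ha0 : 0 < alpha) (hamax : alpha <= alpha_max).
Hypotheses (hma : m * (delta + eps) <= alpha) (haM : alpha <= M * (delta + eps)).
Hypothesis Jmin : forall c s,
  (Jfun ipX ipY ipZ B phi w p P scal Rs gamma ud sm alpha (nu1 * alpha) (nu2 * alpha) (ca, sa)
   <= Jfun ipX ipY ipZ B phi w p P scal Rs gamma ud sm alpha (nu1 * alpha) (nu2 * alpha) (c, s))%E.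

Lemma minimizer_energy : exists rt, Rt (ca, sa) = rt%:E /\
  1 / 2 * hnorm ipZ (B ca sa - ud) ^+ 2 + gamma / 2 * hnorm ipY (sa - sm) ^+ 2 + alpha * rt
  <= 1 / 2 * hnorm ipZ (B cst sst - ud) ^+ 2 + gamma / 2 * hnorm ipY (sst - sm) ^+ 2
     + alpha * R_star.
Proof.
have := Jmin cst sst; rewrite !Jfun_split R_starE -EFinM -EFinD.
have : (0 <= Rt (ca, sa))%E by apply: le_trans (Phi_le_Rtilde ca sa); apply: Phi_ge0.
case: (Rt (ca, sa)) => [rt _| _|] //; last by rewrite mulry gtr0_sg // mul1e addey // leye_eq.
by rewrite -EFinM -EFinD lee_fin => energy; exists rt.
Qed.

Lemma minimizer_Phi_le : (Phi ca <= Phi_bound%:E)%E.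
Proof.
have [rt [Ert energy]] := minimizer_energy.
apply: le_trans (Phi_le_Rtilde ca sa) _; rewrite Ert lee_fin.
rewrite le_max; apply/orP; right.
by apply: (minimizer_value_bound (delta := delta) (eps := eps)) energy;
  rewrite ?hnorm_ge0.
Qed.

(* Source condition and energy comparison: the Bregman distance is O(delta + eps). *)
Lemma minimizer_bregman_le : (breg (ca, sa) (cst, sst) <= (bregman_const * (delta + eps))%:E)%E.
Proof.
have [rt [Ert energy]] := minimizer_energy.
set L := ip_prod ipX ipY xi ((ca, sa) - (cst, sst)).
have Ebreg : breg (ca, sa) (cst, sst) = (rt - R_star - L)%:E by rewrite /bregman Ert R_starE.
have EL : ip_prod ipX ipY xi ((cst, sst) - (ca, sa)) = - L.
  by rewrite /L /ip_prod /= -(opprB ca) -(opprB sa) (ipNr hX) (ipNr hY) opprD.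
have src := hsrc ca sa; rewrite Ebreg EL -EFinM -EFinD lee_fin in src.
rewrite Ebreg lee_fin.
have kka : alpha * k3 <= ka0 by rewrite /ka0 ler_wpM2r.
have r0b : 0 <= hnorm ipZ (B cst sst - ud) <= delta by rewrite hnorm_ge0.
have t0b : 0 <= hnorm ipY (sst - sm) <= eps by rewrite hnorm_ge0.
have eb := hnorm_dist_triangle hZ (B ca sa) (B cst sst) ud.
have fb := hnorm_dist_triangle hY sa sst sm.
have Dbound := bregman_energy_bound ha0 hk1 hk2 hk3 kka hka0 r0b t0b (hnorm_ge0 _ _)
  eb (hnorm_ge0 _ _) fb energy src.
have K10 : 0 <= ka0 + ka0 ^+ 2 / (gamma / 2 - ka0).
  by rewrite addr_ge0 ?ka0_ge0 // divr_ge0 ?sqr_ge0 // subr_ge0 ltW.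
have dh : 0 <= delta <= delta + eps by apply/andP; lra.
have eh : 0 <= eps <= delta + eps by apply/andP; lra.
exact: bregman_rate_bound hm hmM hk1 hk2 K10 hgamma dh eh ha0 hma haM Dbound.
Qed.

(* The Bregman distance dominates ||ca - cst||^2, which gives the rate. *)
Lemma minimizer_rate : hnorm ipX (ca - cst) <= rate_const * Num.sqrt (delta + eps).
Proof.
have lower := bregman_ge_sqr_dist hX hY hphi hw hp sa Phi_bound_ge1
  (hxi : subgradient _ (split_fun ipX phi w p penalty_s) _ _) minimizer_Phi_le Phi_star_le.
have := le_trans lower minimizer_bregman_le; rewrite lee_fin => bound.
apply: (sqrt_rate _ bregman_const_ge0 bound).
have K0 : 0 < Phi_bound := lt_le_trans ltr01 Phi_bound_ge1.
by have := convexity_modulus_gt0 hp K0.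
Qed.

End Minimizer.
End ConvergenceRate.

Unset Implicit Arguments.

Theorem mainTheorem13 (R : realType)
  (X Y Z : lmodType R) (ipX : X -> X -> R) (ipY : Y -> Y -> R) (ipZ : Z -> Z -> R)
  (hX : hilbert ipX) (hY : hilbert ipY) (hZ : hilbert ipZ)
  (B : X -> Y -> Z) (hBbil : bilinear_map B) (CB : R)
  (hBbd : forall c s, hnorm ipZ (B c s) <= CB * hnorm ipX c * hnorm ipY s)
  (hBw : seq_weak_weak_cont ipX ipY ipZ B)
  (P : Y -> Y) (Yn : set Y) (hYn : finite_dim_subspace Yn)
  (hPlin : linear_op P) (hPbd : bounded_op ipY ipY P) (hPYn : forall y, Yn (P y))
  (scal : Y) (hscal : Yn scal)
  (Rs : Y -> R) (hRs0 : forall s, 0 <= Rs s) (hRsconv : convex_fun Rs)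
  (hRslsc : weakly_lsc ipY Rs)
  (I : choiceType) (phi : I -> X) (hphi : orthonormal_basis ipX phi)
  (w : I -> R) (hw : forall i, 1 <= w i)
  (p : R) (hp : 1 < p <= 2)
  (gamma nu1 nu2 : R) (hgamma : 0 < gamma) (hnu1 : 0 < nu1) (hnu2 : 0 < nu2)
  (cst : X) (sst : Y)
  (hcst : forall c : X, B c sst = B cst sst ->
     (Phi_p ipX phi w p cst <= Phi_p ipX phi w p c)%E)
  (alpha_max : R) (halpha_max : 0 < alpha_max)
  (k1 k2 k3 : R) (hk1 : 0 <= k1 < 1) (hk2 : 0 <= k2)
  (hk3 : 0 <= k3) (hk3a : k3 < 1) (hk3b : k3 < gamma / (2 * alpha_max))
  (xi : X * Y)
  (hxi : subgradient (ip_prod ipX ipY) (Rtilde ipX ipY phi w p P scal Rs nu1 nu2)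
           (cst, sst) xi)
  (hsrc : forall (c : X) (s : Y),
     ((ip_prod ipX ipY xi ((cst, sst) - (c, s)))%:E <=
        k1%:E * bregman (ip_prod ipX ipY) (Rtilde ipX ipY phi w p P scal Rs nu1 nu2)
                  xi (c, s) (cst, sst)
        + (k2 * hnorm ipZ (B c s - B cst sst) + k3 * hnorm ipY (s - sst) ^+ 2)%:E)%E)
  (m M : R) (hm : 0 < m) (hmM : m <= M) :
  exists (C eta : R), 0 < eta /\
    forall (delta eps : R) (ud : Z) (sm : Y) (alpha : R) (ca : X) (sa : Y),
      0 <= delta -> 0 <= eps -> delta + eps < eta ->
      hnorm ipZ (B cst sst - ud) <= delta ->
      hnorm ipY (sst - sm) <= eps ->
      0 < alpha -> alpha <= alpha_max ->
      m * (delta + eps) <= alpha -> alpha <= M * (delta + eps) ->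
      (forall (c : X) (s : Y),
         (Jfun ipX ipY ipZ B phi w p P scal Rs gamma ud sm alpha (nu1 * alpha) (nu2 * alpha)
            (ca, sa)
          <= Jfun ipX ipY ipZ B phi w p P scal Rs gamma ud sm alpha (nu1 * alpha) (nu2 * alpha)
            (c, s))%E) ->
      hnorm ipX (ca - cst) <= C * Num.sqrt (delta + eps).
Proof.
have hka0 : alpha_max * k3 < gamma / 2.
  by move: hk3b; rewrite ltr_pdivlMr ?mulr_gt0 // => ?; nra.
exists (rate_const ipX ipY P scal Rs phi w p gamma nu1 nu2 cst sst alpha_max k1 k2 k3 m M), 1.
split=> [|delta eps ud sm alpha ca sa hd he hsmall hud hsm ha0 hamax hma haM Jmin].
  exact: ltr01.
exact: (minimizer_rate hX hY hZ hRs0 hphi hw hp hgamma hnu1 hnu2 halpha_max hk1 hk2 hk3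
  hka0 hxi hsrc hm hmM hd he hsmall hud hsm ha0 hamax hma haM Jmin).
Qed.
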